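(* Consider the Feel-Good Thompson Sampling algorithm described in the context, run with learning rate $\eta\in(0,1]$, in the adversarial setting described there. Then $$\mathrm{Reg}_{\mathsf{MNL}}\le 12\eta NK(K+1)^4T+4\eta T+\frac{Z_T}{\eta},\qquad Z_T=-\mathbb{E}\Big[\log\mathbb{E}_{f\sim p_1}\Big[\exp\Big(-\eta\sum_{t=1}^T(\hat\ell_{t,f}-\hat\ell_{t,f^\star})\Big)\Big]\Big].$$
   Context: $N\ge K\ge1$, $\mathcal{S}$ = subsets $S\subseteq[N]$ with $1\le|S|\le K$. For $S\in\mathcal{S}$, $v\in[0,1]^N$: $\mu(S,v)$ is the distribution on $\{0,\dots,N\}$ with $\mu_i(S,v)=\frac{v_i}{1+\sum_{j\in S}v_j}$ ($i\in S$), $\mu_0(S,v)=\frac{1}{1+\sum_{j\in S}v_j}$, $0$ otherwise; $R(S,v,r)=\frac{\sum_{i\in S}r_iv_i}{1+\sum_{i\in S}v_i}$. Adversarial setting: $\mathcal{F}$ is a class of functions $\mathcal{X}\to[0,1]^N$ containing an unknown $f^\star$; at each round $t=1,\dots,T$ a context $x_t\in\mathcal{X}$ and reward vector $r_t\in[0,1]^N$ are chosen arbitrarily by an adversary (possibly depending on the past history but not on the learner's current internal randomness); the learner picks $S_t\in\mathcal{S}$ and observes $i_t\sim\mu(S_t,f^\star(x_t))$. Regret: $\mathrm{Reg}_{\mathsf{MNL}}=\mathbb{E}[\sum_{t=1}^T\max_{S}R(S,f^\star(x_t),r_t)-R(S_t,f^\star(x_t),r_t)]$. Feel-Good Thompson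 Sampling: $p_1$ is the uniform distribution over $\mathcal{F}$. At round $t$: sample $f_t\sim p_t$; receive $(x_t,r_t)$; choose $S_t\in\arg\max_{S\in\mathcal{S}}R(S,f_t(x_t),r_t)$; observe $i_t$; for each $f\in\mathcal{F}$ define $$\hat\ell_{t,f}=\frac{1}{8\eta K}\sum_{i\in S_t}\big(\mu_i(S_t,f(x_t))-\mathbb{1}[i=i_t]\big)^2-\max_{S\in\mathcal{S}}R(S,f(x_t),r_t);$$ and update $p_{t+1}(f)\propto p_t(f)\exp(-\eta\hat\ell_{t,f})$. *)

From HB Require Import structures.
From mathcomp Require Import all_boot all_order all_algebra.
From mathcomp Require Import reals sequences exp.
Set Implicit Arguments. Unset Strict Implicit. Unset Printing Implicit Defensive.
Import Order.TTheory GRing.Theory Num.Theory.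
Local Open Scope ring_scope.

Section MNL.
Context {R : realType} {N : nat}.

Definition validS (K : nat) (S : {set 'I_N}) : bool := (0 < #|S|)%N && (#|S| <= K)%N.

(* MNL choice distribution; outcome None is the no-purchase item 0 *)
Definition mu (S : {set 'I_N}) (v : 'I_N -> R) (i : option 'I_N) : R :=
  match i with
  | None => (1 + \sum_(j in S) v j)^-1
  | Some k => if k \in S then v k / (1 + \sum_(j in S) v j) else 0
  end.

Definition Rev (S : {set 'I_N}) (v r : 'I_N -> R) : R :=
  (\sum_(i in S) r i * v i) / (1 + \sum_(i in S) v i).

(* max over all valid assortments (all revenues are >= 0 and valid sets exist
   when 1 <= K <= N, so the neutral element 0 does not affect the value) *)
Definition maxRev (K : nat) (v r : 'I_N -> R) : R :=
  \big[Num.max/0]_(S : {set 'I_N} | validS K S) Rev S v r.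

(* One round of the interaction: sampled f_t, context x_t, rewards r_t,
   chosen assortment S_t, observed outcome i_t. *)
Record round (Fi : finType) (X : Type) := Round {
  rf : Fi; rx : X; rr : 'I_N -> R; rS : {set 'I_N}; ri : option 'I_N }.

Context {Fi : finType} {X : Type}.
Variables (K : nat) (eta : R) (eval : Fi -> X -> 'I_N -> R).

Definition lhat (rd : round Fi X) (f : Fi) : R :=
  (8 * eta * K%:R)^-1 *
    \sum_(i in rS rd) (mu (rS rd) (eval f (rx rd)) (Some i) - (ri rd == Some i)%:R) ^+ 2
  - maxRev K (eval f (rx rd)) (rr rd).

Definition p1 : Fi -> R := fun _ => (#|Fi|%:R)^-1.

Definition fgts_update (p : Fi -> R) (rd : round Fi X) : Fi -> R :=
  fun f => p f * expR (- eta * lhat rd f) /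
           \sum_(g : Fi) p g * expR (- eta * lhat rd g).

(* p_t computed from the history of the first t-1 rounds *)
Definition fgts_weights (h : seq (round Fi X)) : Fi -> R := foldl fgts_update p1 h.

Variables (fstar : Fi)
  (adv : seq (round Fi X) -> X * ('I_N -> R))
  (sel : seq (round Fi X) -> ('I_N -> R) -> ('I_N -> R) -> {set 'I_N}).

(* Expectation of g(full history) over the run of n further rounds starting
   from history h: f_t ~ p_t, adversary picks (x_t, r_t) from the past,
   S_t = sel (argmax for f_t), i_t ~ mu(S_t, f*(x_t)). *)
Fixpoint fgts_expect (n : nat) (h : seq (round Fi X)) (g : seq (round Fi X) -> R) : R :=
  match n with
  | O => g h
  | n'.+1 =>
    let xr := adv h in
    \sum_(f : Fi) fgts_weights h f *
      let S := sel h (eval f xr.1) xr.2 in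
      \sum_(i : option 'I_N) mu S (eval fstar xr.1) i *
        fgts_expect n' (rcons h (Round f xr.1 xr.2 S i)) g
  end.

Definition regret_MNL (T : nat) : R :=
  fgts_expect T [::] (fun h =>
    \sum_(rd <- h) (maxRev K (eval fstar (rx rd)) (rr rd) - Rev (rS rd) (eval fstar (rx rd)) (rr rd))).

Definition Z_T (T : nat) : R :=
  - fgts_expect T [::] (fun h =>
      ln (\sum_(f : Fi) p1 f * expR (- eta * \sum_(rd <- h) (lhat rd f - lhat rd fstar)))).

End MNL.

(* Let W(h) = E_{f ~ p_1} exp(-eta sum_t (lhat_{t,f} - lhat_{t,f*})), the
   normaliser of the FGTS posterior after history h.  The potential
   Phi(h) = (regret accumulated along h) + eta^-1 ln W(h) grows in expectation
   by at most C eta per round; as Phi([::]) = 0 and -E[ln W(h_T)] = Z_T, this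
   is the theorem.

   In one round, ln y <= y - 1 reduces the increment of eta^-1 ln W to an
   average of exponentials.  At rate (8K)^-1 the squared loss is exp-concave
   enough on MNL probabilities to contribute
   -(48 K eta)^-1 E_g |mu(S, f_g) - mu(S, f* )|^2, while the feel-good term
   turns the regret of the sampled f into its estimation gap
   R(S_f, f) - R(S_f, f* ).  Decoupling the sampled assortment from the error
   of an independent sample, AM-GM lets the squared-loss gain absorb this
   gap; inverting the MNL map costs the factor (K + 1)^4. *)

From HB Require Import structures.
From mathcomp Require Import all_boot all_order all_algebra.
From mathcomp Require Import reals sequences exp.
From mathcomp Require Import ring lra.
Import Order.TTheory GRing.Theory Num.Theory.
Local Open Scope ring_scope.
Set Implicit Arguments. Unset Strict Implicit.

(** * Real inequalities *)

Lemma sqr_addr_le_young (R : realFieldType) (k a b : R) : 0 <= k ->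
  k * (a + b) ^+ 2 <= k * (k + 1) * a ^+ 2 + (k + 1) * b ^+ 2.
Proof. by move=> hk; have := sqr_ge0 (k * a - b); nra. Qed.

Lemma sqr_sum_le_card (R : realFieldType) (I : finType) (P : {pred I}) (x : I -> R) :
  (\sum_(i | P i) x i) ^+ 2 <= #|P|%:R * \sum_(i | P i) x i ^+ 2.
Proof.
set s := \sum_(i | P i) x i; set q := \sum_(i | P i) x i ^+ 2.
have row i : \sum_(j | P j) (x i - x j) ^+ 2 = #|P|%:R * x i ^+ 2 - 2 * x i * s + q.
  rewrite (eq_bigr (fun j => x i ^+ 2 + (- 2 * x i) * x j + x j ^+ 2)); last by move=> j _; ring.
  rewrite !big_split /= sumr_const -mulr_sumr mulr_natl -/s -/q; ring.
have : 0 <= \sum_(i | P i) \sum_(j | P j) (x i - x j) ^+ 2.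
  by apply: sumr_ge0 => i _; apply: sumr_ge0 => j _; exact: sqr_ge0.
rewrite (eq_bigr _ (fun i _ => row i)) !big_split /= -mulr_sumr sumr_const mulr_natl.
rewrite [X in _ + X + _](eq_bigr (fun i => (- 2 * s) * x i)); last by move=> i _; ring.
rewrite -mulr_sumr -/s -/q -!(mulr_natl q) (_ : - 2 * s * s = - 2 * s ^+ 2); last by ring.
lra.
Qed.

Lemma sum_option (V : nmodType) (T : finType) (F : option T -> V) :
  \sum_(i : option T) F i = F None + \sum_(k : T) F (Some k).
Proof.
rewrite (bigD1 None) //=; congr (_ + _).
rewrite (reindex_omap Some id) /=; last by case.
by apply: eq_bigl => k; rewrite eqxx.
Qed.

Lemma wavg_gt0 (R : numDomainType) (I : finType) (p e : I -> R) :
  (forall i, 0 <= p i) -> \sum_i p i = 1 -> (forall i, 0 < e i) ->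
  0 < \sum_i p i * e i.
Proof.
move=> hp hs he.
have hnn i : predT i -> 0 <= p i * e i by move=> _; rewrite mulr_ge0 // ltW.
rewrite lt_def sumr_ge0 ?andbT //; apply/negP => /eqP /(psumr_eq0P hnn) z.
have : \sum_i p i = 0.
  apply: big1 => i _; have /eqP := z i isT; rewrite mulf_eq0 => /orP[/eqP // | /eqP hei].
  by have := he i; rewrite hei ltxx.
by rewrite hs => /eqP; rewrite oner_eq0.
Qed.

Section RealBounds.
Variable R : realType.
Implicit Types x y : R.

Lemma expR_le_invB x : x < 1 -> expR x <= (1 - x)^-1.
Proof.
move=> hx; have h1 : 1 - x <= expR (- x) by have := expR_ge1Dx (- x).
by rewrite -[expR x]invrK -expRN lef_pV2 ?posrE ?expR_gt0 //; lra.
Qed.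

Lemma expR_le_quadratic_small x : x <= 1/4 -> expR x <= 1 + x + 4/3 * x ^+ 2.
Proof.
move=> hx; have hp : 0 < 1 - x by lra.
apply: (le_trans (@expR_le_invB x ltac:(lra))).
rewrite -(@ler_pM2l _ (1 - x)) // mulfV ?gt_eqF //.
have : 0 <= x ^+ 2 * (1 - 4 * x) by apply: mulr_ge0; [exact: sqr_ge0 | lra].
nra.
Qed.

Lemma expR_le_quadratic x : x <= 1 -> expR x <= 1 + x + 2 * x ^+ 2.
Proof.
move=> hx; set y := x / 2.
have -> : x = y + y by rewrite /y; field.
have hp : 0 < 1 - y by rewrite /y; lra.
have ey := @expR_le_invB y ltac:(lra).
rewrite expRD; apply: (le_trans (ler_pM (expR_ge0 y) (expR_ge0 y) ey ey)).
rewrite -invfM -[_^-1]div1r ler_pdivrMr ?mulr_gt0 //.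
have : 0 <= y ^+ 2 * ((1 - 2 * y) * (5 - 4 * y)).
  by apply: mulr_ge0; [exact: sqr_ge0 | apply: mulr_ge0; rewrite /y; lra].
nra.
Qed.

Lemma expR_ge_13_48 x : -1 <= x -> 13/48 <= expR x.
Proof.
move=> hx; apply: (le_trans _ (_ : expR (-1) <= expR x)); last by rewrite ler_expR.
have -> : (-1 : R) = -(1/4) + -(1/4) + (-(1/4) + -(1/4)) by field.
rewrite !expRD; set e := expR (-(1/4)).
have he : 3/4 <= e by have := expR_ge1Dx (-(1/4) : R); rewrite /e; lra.
have he2 : (3/4) ^+ 2 <= e ^+ 2 by rewrite ler_pXn2r // ?nnegrE //; lra.
have he4 : ((3/4) ^+ 2) ^+ 2 <= (e ^+ 2) ^+ 2.
  by rewrite ler_pXn2r // ?nnegrE ?exprn_ge0 //; lra.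
have -> : e * e * (e * e) = (e ^+ 2) ^+ 2 by rewrite !expr2.
by apply: le_trans he4; lra.
Qed.

Lemma ln_le_subr1 y : 0 < y -> ln y <= y - 1.
Proof. by move=> hy; have := @le_ln1Dx R (y - 1) ltac:(lra); rewrite addrC subrK. Qed.

Lemma normr_le_amgm c x : 0 < c -> `|x| <= c / 2 + x ^+ 2 / (2 * c).
Proof.
move=> hc; have h := sqr_ge0 (c - `|x|).
rewrite -real_normK ?num_real // -(@ler_pM2l _ (2 * c)); last lra.
have -> : 2 * c * (c / 2 + `|x| ^+ 2 / (2 * c)) = c ^+ 2 + `|x| ^+ 2 by field; lra.
nra.
Qed.

Lemma divD1_le_sub u y : 0 <= u <= 1/32 -> 0 <= y <= 1 + u / 3 ->
  y / (1 + u) <= 1 - 8/13 * u.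
Proof.
move=> /andP[hu0 hu1] /andP[hy0 hy1]; rewrite ler_pdivrMr; last lra.
have : u * u <= u * (1/32) by rewrite ler_wpM2l.
nra.
Qed.

Lemma expR_sqshift_le (s D z : R) : 0 <= s <= 1/8 -> -1 <= z ->
  expR (- s * (D + 2 * z)) <= expR (- s * D) * (1 - 2 * s * z + 16/3 * s ^+ 2 * z ^+ 2).
Proof.
move=> /andP[hs0 hs1] hz.
have -> : - s * (D + 2 * z) = - s * D + (- 2 * s * z) by ring.
rewrite expRD ler_wpM2l ?expR_ge0 //.
have hx : - 2 * s * z <= 1/4 by nra.
by apply: (le_trans (expR_le_quadratic_small hx)); lra.
Qed.

Lemma expR_mul_varD_le (s D F c : R) : 0 <= s <= 1/8 -> s * D <= 1/32 ->
  0 <= F <= D / 2 -> c ^+ 2 <= 1/4 ->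
  expR (- s * D) * (1 + 16/3 * s ^+ 2 * (F - c ^+ 2)) <= 1 - 8/13 * s * D.
Proof.
move=> /andP[hs0 hs1] hsD /andP[hF0 hFD] hc2; set t : R := 16/3 * s ^+ 2.
have hD0 : 0 <= D by lra.
have hu : 0 <= s * D <= 1/32 by rewrite mulr_ge0.
have hE : expR (- s * D) <= (1 + s * D)^-1.
  by rewrite mulNr expRN lef_pV2 ?posrE ?expR_gt0 //; [exact: expR_ge1Dx | lra].
have htF : t * F <= s * D / 3.
  have : s * (s * D) <= 1/8 * (s * D) by rewrite ler_wpM2r // mulr_ge0.
  by rewrite /t; nra.
have ht0 : 0 <= t by rewrite /t; have := sqr_ge0 s; lra.
have ht : t <= 1/12 by rewrite /t; nra.
have htc : t * c ^+ 2 <= 1/12 * (1/4) by apply: ler_pM; rewrite ?sqr_ge0.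
have htc0 : 0 <= t * c ^+ 2 by rewrite mulr_ge0 ?sqr_ge0.
have htF0 : 0 <= t * F by rewrite mulr_ge0.
have hy0 : 0 <= 1 + t * (F - c ^+ 2) by lra.
apply: (le_trans (ler_wpM2r hy0 hE)); rewrite mulrC -mulrA.
by apply: divD1_le_sub => //; apply/andP; split; lra.
Qed.

(* Averaging the quadratic bound of [expR_sqshift_le] over the mixture, the
   linear terms cancel since [a0 c + sum_k a k (c - d k) = 0]. *)
Lemma expR_mix_sqshift_le (I : finType) (P : {pred I})
    (a0 s : R) (a d : I -> R) :
  0 <= a0 -> (forall k, P k -> 0 <= a k <= 1/2) -> a0 + \sum_(k | P k) a k = 1 ->
  (forall k, P k -> -1/2 <= d k <= 1/2) ->
  0 <= s <= 1/8 -> s * \sum_(k | P k) d k ^+ 2 <= 1/32 ->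
  a0 * expR (- s * (\sum_(k | P k) d k ^+ 2 + 2 * \sum_(k | P k) a k * d k))
  + \sum_(k | P k) a k * expR (- s * (\sum_(k | P k) d k ^+ 2
                                       + 2 * (\sum_(k | P k) a k * d k - d k)))
    <= 1 - 8/13 * s * \sum_(k | P k) d k ^+ 2.
Proof.
move=> ha0 ha hsum hd hs hsD.
set D := \sum_(k | P k) d k ^+ 2 in hsD *; set c := \sum_(k | P k) a k * d k.
set F := \sum_(k | P k) a k * d k ^+ 2; set A := \sum_(k | P k) a k in hsum.
have hc : -1/2 <= c <= 1/2.
  have hlo : \sum_(k | P k) a k * (-1/2) <= c.
    by apply: ler_sum => k Pk; have /andP[? ?] := ha k Pk; have /andP[? ?] := hd k Pk; nra.
  have hhi : c <= \sum_(k | P k) a k * (1/2).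
    by apply: ler_sum => k Pk; have /andP[? ?] := ha k Pk; have /andP[? ?] := hd k Pk; nra.
  by move: hlo hhi; rewrite -!mulr_suml -/A => ? ?; apply/andP; split; lra.
have /andP[hc0 hc1] := hc.
have hF0 : 0 <= F.
  by apply: sumr_ge0 => k Pk; apply: mulr_ge0; [case/andP: (ha k Pk) | exact: sqr_ge0].
have hFD : F <= D / 2.
  rewrite /D /F mulr_suml; apply: ler_sum => k Pk.
  by have /andP[? ?] := ha k Pk; have := sqr_ge0 (d k); nra.
set E := expR (- s * D); set t : R := 16/3 * s ^+ 2.
have hpt z : -1 <= z -> expR (- s * (D + 2 * z)) <= E * (1 - 2 * s * z + t * z ^+ 2).
  by move=> hz; exact: expR_sqshift_le hs hz.
have hmix : a0 * expR (- s * (D + 2 * c)) + \sum_(k | P k) a k * expR (- s * (D + 2 * (c - d k)))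
    <= E * (1 + t * (F - c ^+ 2)).
  apply: (le_trans (y := a0 * (E * (1 - 2 * s * c + t * c ^+ 2))
      + \sum_(k | P k) a k * (E * (1 - 2 * s * (c - d k) + t * (c - d k) ^+ 2)))).
    apply: lerD; first by rewrite ler_wpM2l //; apply: hpt; lra.
    apply: ler_sum => k Pk; have /andP[? ?] := ha k Pk; have /andP[? ?] := hd k Pk.
    by rewrite ler_wpM2l //; apply: hpt; lra.
  rewrite (eq_bigr (fun k => E * (1 - 2 * s * c + t * c ^+ 2) * a k
      + E * (2 * s - 2 * t * c) * (a k * d k) + E * t * (a k * d k ^+ 2)));
    last by move=> k _; ring.
  by rewrite !big_split /= -!mulr_sumr -/A -/c -/F (_ : a0 = 1 - A); lra.
have hFDb : 0 <= F <= D / 2 by rewrite hF0 hFD.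
have hc2 : c ^+ 2 <= 1/4 by nra.
exact: le_trans hmix (expR_mul_varD_le hs hsD hFDb hc2).
Qed.

Lemma expR_mul_le_feelgood (eta d a y : R) :
  0 < eta <= 1 -> -1 <= d <= 1 -> 0 <= y -> a <= 1 - y ->
  expR (eta * d) * a <= 1 + eta * d + 2 * eta ^+ 2 - 13/48 * y.
Proof.
move=> /andP[he0 he1] /andP[hd0 hd1] hy ha.
have hx1 : eta * d <= 1 by nra.
have hx2 : -1 <= eta * d by nra.
have hd2 : d ^+ 2 <= 1 by nra.
have hsq : (eta * d) ^+ 2 <= eta ^+ 2.
  by rewrite exprMn -[X in _ <= X]mulr1 ler_wpM2l ?sqr_ge0.
have hup := expR_le_quadratic hx1; have hlo := expR_ge_13_48 hx2.
apply: (le_trans (ler_wpM2l (expR_ge0 _) ha)).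
by nra.
Qed.

(* AM-GM with the weight [c = beta / sum_(P) p] balancing the two terms. *)
Lemma wsum_normr_le (I : finType) (P : {pred I}) (p x : I -> R) (beta : R) :
  (forall i, 0 <= p i) -> 0 < beta ->
  \sum_(i | P i) p i * `|x i|
    <= beta / 2 + (2 * beta)^-1 * ((\sum_(i | P i) p i) * \sum_i p i * x i ^+ 2).
Proof.
move=> hp hb; set q := \sum_(i | P i) p i.
have hq0 : 0 <= q by exact: sumr_ge0.
have hE0 : 0 <= \sum_i p i * x i ^+ 2 by apply: sumr_ge0 => i _; rewrite mulr_ge0 ?sqr_ge0.
have hib : 0 <= (2 * beta)^-1 by rewrite invr_ge0; lra.
have [q0 | qn0] := eqVneq q 0.
  rewrite big1 => [|i Pi]; last by rewrite (psumr_eq0P (fun i _ => hp i) q0 Pi) mul0r.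
  by rewrite q0 mul0r mulr0 addr0; lra.
have hqp : 0 < q by rewrite lt_def qn0.
set c := beta / q; have hc : 0 < c by exact: divr_gt0.
apply: (le_trans (y := \sum_(i | P i) (c / 2 * p i + (2 * c)^-1 * (p i * x i ^+ 2)))).
  apply: ler_sum => i _; have := normr_le_amgm (x i) hc; have := hp i.
  by nra.
rewrite big_split /= -!mulr_sumr -/q.
have hPE : \sum_(i | P i) p i * x i ^+ 2 <= \sum_i p i * x i ^+ 2.
  rewrite [X in _ <= X](bigID P) /= lerDl; apply: sumr_ge0 => i _.
  by rewrite mulr_ge0 ?sqr_ge0.
have -> : c / 2 * q = beta / 2 by rewrite /c; field.
have -> : (2 * c)^-1 = (2 * beta)^-1 * q by rewrite /c; field; rewrite qn0 gt_eqF.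
by rewrite lerD2l -mulrA ler_wpM2l // ler_wpM2l.
Qed.

(* [wsum_normr_le] for each item [j], after exchanging the sums. *)
Lemma decouple_le (I : finType) (N : nat) (p : I -> R)
    (S : I -> {set 'I_N}) (x : I -> 'I_N -> R) (beta : R) :
  (forall i, 0 <= p i) -> 0 < beta ->
  \sum_f p f * \sum_(j in S f) `|x f j|
    <= N%:R * beta / 2
       + (2 * beta)^-1 * \sum_f \sum_g p f * p g * \sum_(j in S f) x g j ^+ 2.
Proof.
move=> hp hb.
have e1 : \sum_f p f * \sum_(j in S f) `|x f j|
    = \sum_(j : 'I_N) \sum_(f | j \in S f) p f * `|x f j|.
  under eq_bigr => f _ do rewrite mulr_sumr.
  by rewrite (exchange_big_dep predT).
have e2 : \sum_f \sum_g p f * p g * \sum_(j in S f) x g j ^+ 2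
    = \sum_(j : 'I_N) (\sum_(f | j \in S f) p f) * \sum_g p g * x g j ^+ 2.
  transitivity (\sum_f \sum_(j in S f) p f * \sum_g p g * x g j ^+ 2).
    apply: eq_bigr => f _; under eq_bigr => g _ do rewrite mulr_sumr.
    rewrite exchange_big /=; apply: eq_bigr => j _; rewrite mulr_sumr.
    by apply: eq_bigr => g _; rewrite mulrA.
  by rewrite (exchange_big_dep predT) //=; apply: eq_bigr => j _; rewrite mulr_suml.
have -> : N%:R * beta / 2 = \sum_(j : 'I_N) beta / 2.
  by rewrite sumr_const card_ord -(mulr_natl (beta / 2)) mulrA.
rewrite e1 e2 mulr_sumr -big_split /=.
by apply: ler_sum => j _; exact: wsum_normr_le.
Qed.

End RealBounds.

(** * The multinomial logit model *)

Section MNLModel.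
Variables (R : realType) (N : nat).
Implicit Types (S : {set 'I_N}) (v w r : 'I_N -> R).

Definition unit_valued v := forall j, 0 <= v j <= 1.

Lemma sum_unit_valued_ge0 S v : unit_valued v -> 0 <= \sum_(j in S) v j.
Proof. by move=> hv; apply: sumr_ge0 => j _; have /andP[] := hv j. Qed.

Lemma sum_unit_valued_le_card S v : unit_valued v -> \sum_(j in S) v j <= #|S|%:R.
Proof.
move=> hv; rewrite -[#|S|%:R]mulr1 mulr_natl -sumr_const.
by apply: ler_sum => j _; have /andP[] := hv j.
Qed.

Lemma le_sum_unit_valued S v k : unit_valued v -> k \in S -> v k <= \sum_(j in S) v j.
Proof.
move=> hv kS; rewrite (bigD1 k) //= lerDl; apply: sumr_ge0 => j _.
by have /andP[] := hv j.
Qed.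

Lemma mu_SomeE S v k : k \in S -> mu S v (Some k) = v k / (1 + \sum_(j in S) v j).
Proof. by rewrite /= => ->. Qed.

Lemma mu_Some_le_half S v k : unit_valued v -> k \in S -> 0 <= mu S v (Some k) <= 1/2.
Proof.
move=> hv kS; rewrite mu_SomeE //.
have h1 := le_sum_unit_valued hv kS; have /andP[h2 h3] := hv k.
apply/andP; split; first by apply: divr_ge0; lra.
by rewrite ler_pdivrMr; lra.
Qed.

Lemma mu_ge0 S v i : unit_valued v -> 0 <= mu S v i.
Proof.
move=> hv; have hs := sum_unit_valued_ge0 S hv.
case: i => [k|] /=; last by rewrite invr_ge0; lra.
by case: ifP => // _; have /andP[? _] := hv k; apply: divr_ge0; lra.
Qed.

Lemma mu_None_add_sum S v : unit_valued v ->
  mu S v None + \sum_(j in S) mu S v (Some j) = 1.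
Proof.
move=> hv; have h0 := sum_unit_valued_ge0 S hv.
rewrite (eq_bigr _ (fun j jS => mu_SomeE v jS)) -mulr_suml /=; field; lra.
Qed.

Lemma mu_sum1 S v : unit_valued v -> \sum_i mu S v i = 1.
Proof.
move=> hv; rewrite sum_option -(mu_None_add_sum S hv) [in RHS]big_mkcond.
by congr (_ + _); apply: eq_bigr => k _ /=; case: ifP.
Qed.

Lemma Rev_ge0_le1 S v r : unit_valued v -> unit_valued r -> 0 <= Rev S v r <= 1.
Proof.
move=> hv hr; have h0 := sum_unit_valued_ge0 S hv.
have h1 : 0 <= \sum_(i in S) r i * v i.
  by apply: sumr_ge0 => j _; have /andP[? ?] := hr j; have /andP[? ?] := hv j; nra.
have h2 : \sum_(i in S) r i * v i <= \sum_(i in S) v i.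
  by apply: ler_sum => j _; have /andP[? ?] := hr j; have /andP[? ?] := hv j; nra.
rewrite /Rev; apply/andP; split; first by apply: divr_ge0; lra.
by rewrite ler_pdivrMr; lra.
Qed.

Lemma maxRev_eq_Rev K S0 v r : unit_valued v -> unit_valued r ->
  validS K S0 -> (forall S, validS K S -> Rev S v r <= Rev S0 v r) ->
  maxRev K v r = Rev S0 v r.
Proof.
move=> hv hr hS0 hmax; have /andP[h0 _] := Rev_ge0_le1 S0 hv hr.
apply/eqP; rewrite eq_le; apply/andP; split; first exact: bigmax_le.
exact: (le_bigmax_cond 0 (fun S => Rev S v r) hS0).
Qed.

Lemma Rev_subE S v w r : unit_valued v -> unit_valued w ->
  Rev S v r - Rev S w r =
  (\sum_(j in S) (v j - w j) * (r j - Rev S w r)) / (1 + \sum_(j in S) v j).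
Proof.
move=> hv hw; have hsv := sum_unit_valued_ge0 S hv; have hsw := sum_unit_valued_ge0 S hw.
rewrite (eq_bigr (fun j => (r j * v j - r j * w j) + (- Rev S w r) * (v j - w j)));
  last by move=> j _; ring.
rewrite big_split /= sumrB -mulr_sumr sumrB /Rev; field; lra.
Qed.

Lemma Rev_sub_le S v w r : unit_valued v -> unit_valued w -> unit_valued r ->
  Rev S v r - Rev S w r <= \sum_(j in S) `|v j - w j|.
Proof.
move=> hv hw hr; rewrite Rev_subE //.
have hsv := sum_unit_valued_ge0 S hv.
have /andP[hR0 hR1] := Rev_ge0_le1 S hw hr.
have hnum : \sum_(j in S) (v j - w j) * (r j - Rev S w r) <= \sum_(j in S) `|v j - w j|.
  apply: ler_sum => j _; apply: (le_trans (ler_norm _)); rewrite normrM.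
  have : `|r j - Rev S w r| <= 1 by rewrite ler_norml; have /andP[? ?] := hr j; lra.
  by have := normr_ge0 (v j - w j); nra.
have hden : 0 <= \sum_(j in S) `|v j - w j| by apply: sumr_ge0 => j _; exact: normr_ge0.
by rewrite ler_pdivrMr; nra.
Qed.

Definition sqloss S v (i : option 'I_N) : R :=
  \sum_(j in S) (mu S v (Some j) - (i == Some j)%:R) ^+ 2.

Definition mu_sqdist S v w : R :=
  \sum_(j in S) (mu S v (Some j) - mu S w (Some j)) ^+ 2.

Lemma mu_sqdist_ge0 S v w : 0 <= mu_sqdist S v w.
Proof. by apply: sumr_ge0 => j _; exact: sqr_ge0. Qed.

Lemma weight_sub_muE S v w j : unit_valued v -> unit_valued w -> j \in S ->
  v j - w j = (1 + \sum_(i in S) v i) *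
    (mu S v (Some j) - mu S w (Some j)
     + w j * \sum_(i in S) (mu S v (Some i) - mu S w (Some i))).
Proof.
move=> hv hw jS; have hsv := sum_unit_valued_ge0 S hv; have hsw := sum_unit_valued_ge0 S hw.
rewrite sumrB (eq_bigr _ (fun i iS => mu_SomeE v iS)) (eq_bigr _ (fun i iS => mu_SomeE w iS)).
by rewrite -!mulr_suml !mu_SomeE //; field; lra.
Qed.

Lemma sqdist_le_mu_sqdist K S v w : validS K S -> unit_valued v -> unit_valued w ->
  \sum_(j in S) (v j - w j) ^+ 2 <= (K%:R + 1) ^+ 4 * mu_sqdist S v w.
Proof.
move=> /andP[hS0 hSK] hv hw; set k : R := K%:R; set D := mu_sqdist S v w.
have hSk : #|S|%:R <= k by rewrite ler_nat.
have hk1 : 1 <= k by rewrite ler1n (leq_trans hS0 hSK).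
have /andP[hsv0 hsvk] : 0 <= \sum_(j in S) v j <= k.
  by rewrite sum_unit_valued_ge0 //= (le_trans (sum_unit_valued_le_card S hv)).
pose d j := mu S v (Some j) - mu S w (Some j); set tau := \sum_(j in S) d j.
have hD0 : 0 <= D := mu_sqdist_ge0 S v w.
have htau : tau ^+ 2 <= k * D.
  by apply: (le_trans (sqr_sum_le_card _ d)); rewrite ler_wpM2r.
have hw2 : \sum_(j in S) w j ^+ 2 <= k.
  apply: le_trans hSk; rewrite -[#|S|%:R]mulr1 mulr_natl -sumr_const.
  by apply: ler_sum => j _; have /andP[? ?] := hw j; nra.
have hpt j : j \in S -> k * (v j - w j) ^+ 2
    <= (k + 1) ^+ 2 * (k * (k + 1) * d j ^+ 2 + (k + 1) * tau ^+ 2 * w j ^+ 2).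
  move=> jS; rewrite (weight_sub_muE hv hw jS) -/(d j) -/tau exprMn mulrCA.
  have hA : (1 + \sum_(i in S) v i) ^+ 2 <= (k + 1) ^+ 2 by rewrite ler_pXn2r // ?nnegrE; lra.
  have hY := sqr_addr_le_young (d j) (w j * tau) (ltW (lt_le_trans ltr01 hk1)).
  rewrite exprMn (mulrC (w j ^+ 2)) (mulrA (k + 1)) in hY.
  by apply: ler_pM hA hY; [exact: sqr_ge0 | apply: mulr_ge0; [lra | exact: sqr_ge0]].
have hsum : k * \sum_(j in S) (v j - w j) ^+ 2 <= k * ((k + 1) ^+ 4 * D).
  rewrite mulr_sumr; apply: (le_trans (ler_sum _ hpt)).
  rewrite -mulr_sumr big_split /= -!mulr_sumr -/D.
  have hkt : (k + 1) * tau ^+ 2 <= (k + 1) * (k * D) by rewrite ler_wpM2l //; lra.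
  have : (k + 1) * tau ^+ 2 * \sum_(j in S) w j ^+ 2 <= (k + 1) * (k * D) * k.
    by apply: ler_pM hkt hw2 => //; [apply: mulr_ge0; [lra | exact: sqr_ge0] |
      apply: sumr_ge0 => j _; exact: sqr_ge0].
  have -> : k * ((k + 1) ^+ 4 * D)
    = (k + 1) ^+ 2 * (k * (k + 1) * D + (k + 1) * (k * D) * k) by ring.
  by move=> h; rewrite ler_wpM2l ?sqr_ge0 // lerD2l.
by rewrite ler_pM2l in hsum; lra.
Qed.

Lemma wavg_Rev_sub_le K (I : finType) (p : I -> R) (S : I -> {set 'I_N})
    (v : I -> 'I_N -> R) w r beta :
  (forall i, 0 <= p i) -> 0 < beta -> (forall i, validS K (S i)) ->
  (forall i, unit_valued (v i)) -> unit_valued w -> unit_valued r ->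
  \sum_f p f * (Rev (S f) (v f) r - Rev (S f) w r)
    <= N%:R * beta / 2 + (2 * beta)^-1 * (K%:R + 1) ^+ 4 *
       \sum_f \sum_g p f * p g * mu_sqdist (S f) (v g) w.
Proof.
move=> hp hb hS hv hw hr.
apply: (le_trans (y := \sum_f p f * \sum_(j in S f) `|v f j - w j|)).
  by apply: ler_sum => f _; rewrite ler_wpM2l //; exact: Rev_sub_le.
apply: (le_trans (decouple_le S (fun f j => v f j - w j) hp hb)).
have hib : 0 <= (2 * beta)^-1 by rewrite invr_ge0; lra.
rewrite lerD2l -mulrA ler_wpM2l // mulr_sumr; apply: ler_sum => f _.
rewrite mulr_sumr; apply: ler_sum => g _; rewrite mulrCA ler_wpM2l ?mulr_ge0 //.
exact: sqdist_le_mu_sqdist.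
Qed.

Lemma sqloss_sub_None S v w :
  sqloss S v None - sqloss S w None =
  mu_sqdist S v w + 2 * \sum_(j in S) mu S w (Some j) * (mu S v (Some j) - mu S w (Some j)).
Proof.
rewrite /sqloss -sumrB /mu_sqdist mulr_sumr -big_split; apply: eq_bigr => j _ /=.
by move: (mu S v (Some j)) (mu S w (Some j)) => x y; ring.
Qed.

Lemma sqloss_sub_Some S v w k : k \in S ->
  sqloss S v (Some k) - sqloss S w (Some k) =
  mu_sqdist S v w + 2 * (\sum_(j in S) mu S w (Some j) * (mu S v (Some j) - mu S w (Some j))
                         - (mu S v (Some k) - mu S w (Some k))).
Proof.
move=> kS; pose d j := mu S v (Some j) - mu S w (Some j).
have hk : \sum_(j in S) (k == j)%:R * d j = d k.
  rewrite (bigD1 k) //= eqxx mul1r big1 ?addr0 // => j /andP[_ /negbTE].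
  by rewrite eq_sym => ->; rewrite mul0r.
rewrite -/(d k) -hk /sqloss -sumrB /mu_sqdist -sumrB mulr_sumr -big_split.
apply: eq_bigr => j _; rewrite /d (_ : (Some k == Some j) = (k == j)) //.
by move: (mu S v (Some j)) (mu S w (Some j)) => x y /=; ring.
Qed.

(* The squared loss is exp-concave on the MNL probabilities: with the rate
   [(8K)^-1], the mixture gains a term proportional to the squared distance. *)
Lemma mu_expR_sqloss_le K S v w : validS K S -> unit_valued v -> unit_valued w ->
  \sum_i mu S w i * expR (- (8 * K%:R)^-1 * (sqloss S v i - sqloss S w i))
    <= 1 - (13 * K%:R)^-1 * mu_sqdist S v w.
Proof.
move=> /andP[hS0 hSK] hv hw.
have hK : 1 <= (K%:R : R) by rewrite ler1n (leq_trans hS0 hSK).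
set s := (8 * K%:R)^-1.
pose d j := mu S v (Some j) - mu S w (Some j).
have hd k : k \in S -> -1/2 <= d k <= 1/2.
  move=> kS; have /andP[? ?] := mu_Some_le_half hv kS; have /andP[? ?] := mu_Some_le_half hw kS.
  by apply/andP; rewrite /d; split; lra.
have hs : 0 <= s <= 1/8.
  apply/andP; split; first by rewrite /s invr_ge0; lra.
  by rewrite /s div1r lef_pV2 ?posrE; lra.
have hsD : s * mu_sqdist S v w <= 1/32.
  have hD : mu_sqdist S v w <= K%:R / 4.
    apply: (le_trans (y := \sum_(j in S) (1/4 : R))).
      by apply: ler_sum => j jS; rewrite -/(d j); have /andP[? ?] := hd j jS; nra.
    have hSKR : (#|S|%:R : R) <= K%:R by rewrite ler_nat.
    by rewrite sumr_const -mulr_natr; lra.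
  apply: (le_trans (y := s * (K%:R / 4))); first by rewrite ler_wpM2l //; case/andP: hs.
  by rewrite /s (_ : (8 * K%:R)^-1 * (K%:R / 4) = 1/32 :> R) //; field; lra.
rewrite sum_option sqloss_sub_None.
rewrite (_ : \sum_(k : 'I_N) _ = \sum_(k in S) mu S w (Some k) * expR (- s *
    (mu_sqdist S v w + 2 * (\sum_(j in S) mu S w (Some j) * d j - d k)))); last first.
  rewrite [RHS]big_mkcond; apply: eq_bigr => k _; case: ifP => kS; first by rewrite sqloss_sub_Some.
  by rewrite /= kS mul0r.
have := expR_mix_sqshift_le (mu_ge0 S None hw) (fun k kS => mu_Some_le_half hw kS)
  (mu_None_add_sum S hw) hd hs hsD.
by rewrite (_ : (13 * K%:R)^-1 = 8/13 * s) //; rewrite /s; field; lra.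
Qed.

End MNLModel.

(** * One round of Feel-Good Thompson Sampling *)

Section Round.
Variables (R : realType) (N K : nat) (Fi : finType) (X : Type)
  (eval : Fi -> X -> 'I_N -> R) (fstar : Fi) (eta : R).
Hypotheses (hK : (1 <= K)%N) (he0 : 0 < eta) (he1 : eta <= 1)
  (hev : forall f x, unit_valued (eval f x)).

Local Notation l := (lhat K eta eval).

Lemma lhat_sub f x r S i g :
  - eta * (l (Round f x r S i) g - l (Round f x r S i) fstar)
   = - (8 * K%:R)^-1 * (sqloss S (eval g x) i - sqloss S (eval fstar x) i)
     + eta * (maxRev K (eval g x) r - maxRev K (eval fstar x) r).
Proof. by rewrite /lhat /sqloss /=; field; rewrite pnatr_eq0 -lt0n hK gt_eqF. Qed.

Lemma mix_feelgood_le (x : X) (r : 'I_N -> R) (S : {set 'I_N}) (g : Fi) :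
  validS K S -> (forall g, 0 <= maxRev K (eval g x) r <= 1) ->
  expR (eta * (maxRev K (eval g x) r - maxRev K (eval fstar x) r)) *
    \sum_i mu S (eval fstar x) i *
      expR (- (8 * K%:R)^-1 * (sqloss S (eval g x) i - sqloss S (eval fstar x) i))
  <= 1 + eta * (maxRev K (eval g x) r - maxRev K (eval fstar x) r) + 2 * eta ^+ 2
     - (48 * K%:R)^-1 * mu_sqdist S (eval g x) (eval fstar x).
Proof.
move=> hS hmR; have /andP[? ?] := hmR g; have /andP[? ?] := hmR fstar.
have hKR : 1 <= (K%:R : R) by rewrite ler1n.
have -> : (48 * K%:R)^-1 = 13/48 * (13 * K%:R)^-1 :> R by field; rewrite pnatr_eq0 -lt0n hK.
rewrite -mulrA; apply: expR_mul_le_feelgood; rewrite ?he0 ?he1 //.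
- by apply/andP; split; lra.
- by rewrite mulr_ge0 ?mu_sqdist_ge0 // invr_ge0; lra.
- exact: mu_expR_sqloss_le.
Qed.

(* The log-wealth of the exponential weights, bounded through [ln y <= y - 1]
   and [mix_feelgood_le] for every sampled [g]. *)
Lemma mu_ln_wealth_le (p : Fi -> R) x r S f :
  (forall g, 0 <= p g) -> \sum_g p g = 1 -> validS K S ->
  (forall g, 0 <= maxRev K (eval g x) r <= 1) ->
  \sum_i mu S (eval fstar x) i * (eta^-1 * ln (\sum_g p g *
       expR (- eta * (l (Round f x r S i) g - l (Round f x r S i) fstar))))
  <= \sum_g p g * (maxRev K (eval g x) r - maxRev K (eval fstar x) r) + 2 * eta
     - (48 * K%:R * eta)^-1 * \sum_g p g * mu_sqdist S (eval g x) (eval fstar x).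
Proof.
move=> hp hs hS hmR; set vs := eval fstar x.
pose dR g := maxRev K (eval g x) r - maxRev K vs r.
pose a g i := expR (- (8 * K%:R)^-1 * (sqloss S (eval g x) i - sqloss S vs i)).
pose b g := expR (eta * dR g).
have hW i : \sum_g p g * expR (- eta * (l (Round f x r S i) g - l (Round f x r S i) fstar))
    = \sum_g p g * b g * a g i.
  by apply: eq_bigr => g _; rewrite lhat_sub expRD -mulrA [a g i * _]mulrC.
under eq_bigr => i _ do rewrite hW.
have hie : 0 <= eta^-1 by rewrite invr_ge0 ltW.
have hln i : mu S vs i * (eta^-1 * ln (\sum_g p g * b g * a g i))
    <= mu S vs i * (eta^-1 * (\sum_g p g * b g * a g i - 1)).
  rewrite ler_wpM2l ?(mu_ge0 S i (hev fstar x)) // ler_wpM2l // ln_le_subr1 //.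
  by under eq_bigr => g _ do rewrite -mulrA; apply: wavg_gt0 => // g; rewrite mulr_gt0 ?expR_gt0.
apply: (le_trans (ler_sum _ (fun i _ => hln i))).
have -> : \sum_i mu S vs i * (eta^-1 * (\sum_g p g * b g * a g i - 1))
    = eta^-1 * (\sum_g p g * (b g * \sum_i mu S vs i * a g i) - 1).
  rewrite (eq_bigr (fun i => eta^-1 * \sum_g p g * b g * (mu S vs i * a g i)
      - eta^-1 * mu S vs i)); last first.
    move=> i _; have -> : \sum_g p g * b g * (mu S vs i * a g i)
        = mu S vs i * \sum_g p g * b g * a g i.
      by rewrite mulr_sumr; apply: eq_bigr => g _; ring.
    by ring.
  rewrite sumrB -!mulr_sumr (mu_sum1 S (hev fstar x)) -mulrBr exchange_big /=.
  congr (_ * (_ - _)); apply: eq_bigr => g _; rewrite !mulr_sumr.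
  by apply: eq_bigr => i _; ring.
have hmix g : p g * (b g * \sum_i mu S vs i * a g i)
    <= p g * (1 + eta * dR g + 2 * eta ^+ 2 - (48 * K%:R)^-1 * mu_sqdist S (eval g x) vs).
  by rewrite ler_wpM2l //; exact: mix_feelgood_le.
apply: (le_trans (ler_wpM2l hie (lerD (ler_sum _ (fun g _ => hmix g)) (lexx _)))).
rewrite (eq_bigr (fun g => (1 + 2 * eta ^+ 2) * p g + eta * (p g * dR g)
    - (48 * K%:R)^-1 * (p g * mu_sqdist S (eval g x) vs))); last by move=> g _; ring.
rewrite !big_split /= sumrN -!mulr_sumr hs le_eqVlt; apply/orP; left; apply/eqP.
by field; rewrite pnatr_eq0 -lt0n hK gt_eqF.
Qed.

(* The feel-good term [M] turns the regret of the sampled [f] into its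
   estimation gap, which is then paid for by the squared-loss term. *)
Lemma round_potential_le (p : Fi -> R) x r (Sf : Fi -> {set 'I_N}) :
  (forall g, 0 <= p g) -> \sum_g p g = 1 -> unit_valued r ->
  (forall g, validS K (Sf g) /\ maxRev K (eval g x) r = Rev (Sf g) (eval g x) r) ->
  \sum_f p f * \sum_i mu (Sf f) (eval fstar x) i *
     ((maxRev K (eval fstar x) r - Rev (Sf f) (eval fstar x) r) + eta^-1 * ln (\sum_g p g *
        expR (- eta * (l (Round f x r (Sf f) i) g - l (Round f x r (Sf f) i) fstar))))
  <= (12 * N%:R * K%:R * (K%:R + 1) ^+ 4 + 4) * eta.
Proof.
move=> hp hs hr hSf; set vs := eval fstar x.
have hKR : 1 <= (K%:R : R) by rewrite ler1n.
have hmR g : 0 <= maxRev K (eval g x) r <= 1.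
  by case: (hSf g) => _ ->; exact: Rev_ge0_le1.
pose M := \sum_g p g * (maxRev K (eval g x) r - maxRev K vs r).
set c := (48 * K%:R * eta)^-1.
pose DD f := \sum_g p g * mu_sqdist (Sf f) (eval g x) vs.
have hf f : \sum_i mu (Sf f) vs i *
     ((maxRev K vs r - Rev (Sf f) vs r) + eta^-1 * ln (\sum_g p g *
        expR (- eta * (l (Round f x r (Sf f) i) g - l (Round f x r (Sf f) i) fstar))))
    <= (maxRev K vs r - Rev (Sf f) vs r) + (M + 2 * eta - c * DD f).
  under eq_bigr => i _ do rewrite mulrDr.
  rewrite big_split /= -mulr_suml (mu_sum1 _ (hev fstar x)) mul1r lerD2l.
  by apply: mu_ln_wealth_le => //; case: (hSf f).
apply: (le_trans (ler_sum _ (fun f _ => ler_wpM2l (hp f) (hf f)))).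
pose gap f := Rev (Sf f) (eval f x) r - Rev (Sf f) vs r.
pose Q := \sum_f \sum_g p f * p g * mu_sqdist (Sf f) (eval g x) vs.
have -> : \sum_f p f * ((maxRev K vs r - Rev (Sf f) vs r) + (M + 2 * eta - c * DD f))
    = \sum_f p f * gap f + 2 * eta - c * Q.
  rewrite (eq_bigr (fun f => p f * gap f - p f * (maxRev K (eval f x) r - maxRev K vs r)
      + (M + 2 * eta) * p f - c * (p f * DD f))); last first.
    by move=> f _; rewrite /gap; case: (hSf f) => _ ->; ring.
  rewrite !big_split /= !sumrN -!mulr_sumr hs -/M; congr (_ - _ * _); first ring.
  by apply: eq_bigr => f _; rewrite /DD mulr_sumr; apply: eq_bigr => g _; rewrite mulrA.
set beta := 24 * K%:R * (K%:R + 1) ^+ 4 * eta.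
have hK4 : 1 <= (K%:R + 1) ^+ 4 :> R by rewrite exprn_ege1 //; lra.
have hbeta : 0 < beta by rewrite /beta; apply: mulr_gt0 => //; apply: mulr_gt0; lra.
have hgap : \sum_f p f * gap f <= N%:R * beta / 2 + c * Q.
  have -> : c = (2 * beta)^-1 * (K%:R + 1) ^+ 4.
    by rewrite /c /beta; field; rewrite pnatr_eq0 -lt0n hK /= !gt_eqF //; lra.
  apply: wavg_Rev_sub_le => // [f | f]; [by case: (hSf f) | exact: hev].
have -> : (12 * N%:R * K%:R * (K%:R + 1) ^+ 4 + 4) * eta
    = N%:R * beta / 2 + 2 * eta + 2 * eta by rewrite /beta; field.
by have := ltW he0; lra.
Qed.

End Round.

(** * The potential argument *)

Lemma p1_gt0 (R : realType) (Fi : finType) (g : Fi) : 0 < p1 g :> R.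
Proof. by rewrite /p1 invr_gt0 ltr0n; apply/card_gt0P; exists g. Qed.

Lemma p1_sum1 (R : realType) (Fi : finType) (g0 : Fi) : \sum_(g : Fi) p1 g = 1 :> R.
Proof.
have h : (0 < #|Fi|)%N by apply/card_gt0P; exists g0.
by rewrite /p1 sumr_const -(mulr_natr (#|Fi|%:R : R)^-1) mulVf // pnatr_eq0 -lt0n.
Qed.

Section FgtsExpect.
Variables (R : realType) (N K : nat) (Fi : finType) (X : Type)
  (eval : Fi -> X -> 'I_N -> R) (fstar : Fi) (eta : R)
  (adv : seq (@round R N Fi X) -> X * ('I_N -> R))
  (sel : seq (@round R N Fi X) -> ('I_N -> R) -> ('I_N -> R) -> {set 'I_N}).

Local Notation E n h F := (fgts_expect K eta eval fstar adv sel n h F).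

Lemma fgts_expectDZ n h (F G : seq (round Fi X) -> R) (b : R) :
  E n h (fun h' => F h' + b * G h') = E n h F + b * E n h G.
Proof.
elim: n h => [|n IH] h //=.
under eq_bigr => f _ do under eq_bigr => i _ do rewrite IH.
rewrite !mulr_sumr -big_split /=; apply: eq_bigr => f _.
by rewrite !mulr_sumr -big_split /=; apply: eq_bigr => i _; ring.
Qed.

End FgtsExpect.

Section Potential.
Variables (R : realType) (N K : nat) (Fi : finType) (X : Type)
  (eval : Fi -> X -> 'I_N -> R) (fstar : Fi) (eta : R)
  (adv : seq (@round R N Fi X) -> X * ('I_N -> R))
  (sel : seq (@round R N Fi X) -> ('I_N -> R) -> ('I_N -> R) -> {set 'I_N}).
Hypotheses (hK : (1 <= K)%N) (he0 : 0 < eta) (he1 : eta <= 1)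
  (hev : forall f x, unit_valued (eval f x))
  (hadv : forall h, unit_valued (adv h).2)
  (hsel : forall h v r, validS K (sel h v r) /\
     forall S, validS K S -> Rev S v r <= Rev (sel h v r) v r).

Local Notation l := (lhat K eta eval).
Local Notation rnd := (@round R N Fi X).
Local Notation w := (fgts_weights K eta eval).
Local Notation E n h F := (fgts_expect K eta eval fstar adv sel n h F).

Definition wealth (h : seq rnd) : R :=
  \sum_(g : Fi) p1 g * expR (- eta * \sum_(rd <- h) (l rd g - l rd fstar)).

Lemma wealth_gt0 h : 0 < wealth h.
Proof.
by apply: wavg_gt0 => [g||g]; [exact/ltW/p1_gt0 | exact: p1_sum1 fstar | exact: expR_gt0].
Qed.

Lemma wealth_nil : wealth [::] = 1.
Proof.
rewrite -(p1_sum1 _ fstar); apply: eq_bigr => g _.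
by rewrite big_nil mulr0 expR0 mulr1.
Qed.

(* The multiplicative updates telescope: [p_t] is the exponential-weights
   posterior of the cumulative losses, which may be measured relative to [f*]. *)
Lemma fgts_weightsE h f :
  w h f = p1 f * expR (- eta * \sum_(rd <- h) (l rd f - l rd fstar)) / wealth h.
Proof.
elim/last_ind: h f => [|h rd IH] f.
  by rewrite wealth_nil big_nil mulr0 expR0 mulr1 divr1.
rewrite /fgts_weights foldl_rcons -/(fgts_weights K eta eval h) /fgts_update.
have hW := wealth_gt0 h.
set e := fun g => expR (- eta * \sum_(rd0 <- h) (l rd0 g - l rd0 fstar)).
set d := fun g => expR (- eta * (l rd g - l rd fstar)).
set kap := expR (- eta * l rd fstar).
have he g : expR (- eta * l rd g) = d g * kap.
  by rewrite /d /kap -expRD; congr expR; ring.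
have hr g : expR (- eta * \sum_(rd0 <- rcons h rd) (l rd0 g - l rd0 fstar)) = e g * d g.
  by rewrite big_rcons /= /e /d -expRD; congr expR; ring.
have hWr : wealth (rcons h rd) = \sum_g p1 g * e g * d g.
  by rewrite /wealth; apply: eq_bigr => g _; rewrite hr mulrA.
under eq_bigr => g _ do rewrite IH he.
rewrite IH he hr hWr.
have hZ : 0 < \sum_g p1 g * e g * d g by rewrite -hWr; exact: wealth_gt0.
rewrite (eq_bigr (fun g => (p1 g * e g * d g) * (kap / wealth h))); last first.
  by move=> g _; rewrite /e; ring.
rewrite -mulr_suml.
have hk : 0 < kap by exact: expR_gt0.
rewrite -/(e f); field.
by rewrite !gt_eqF.
Qed.

Lemma fgts_weights_ge0 h f : 0 <= w h f.
Proof.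
by rewrite fgts_weightsE divr_ge0 ?mulr_ge0 ?expR_ge0 ?(ltW (p1_gt0 R _)) ?(ltW (wealth_gt0 h)).
Qed.

Lemma fgts_weights_sum1 h : \sum_(f : Fi) w h f = 1.
Proof.
under eq_bigr => f _ do rewrite fgts_weightsE.
by rewrite -mulr_suml -/(wealth h) mulfV // gt_eqF // wealth_gt0.
Qed.

Lemma wealth_rcons h rd : wealth (rcons h rd) =
  wealth h * \sum_(g : Fi) w h g * expR (- eta * (l rd g - l rd fstar)).
Proof.
under [in RHS]eq_bigr => g _ do rewrite fgts_weightsE.
rewrite mulr_sumr /wealth; apply: eq_bigr => g _.
have hW := wealth_gt0 h.
rewrite big_rcons /= -/(wealth h) mulrDr expRD; field.
by rewrite gt_eqF.
Qed.

Definition cum_regret (h : seq rnd) : R := \sum_(rd <- h)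
  (maxRev K (eval fstar (rx rd)) (rr rd) - Rev (rS rd) (eval fstar (rx rd)) (rr rd)).

Definition potential (h : seq rnd) : R := cum_regret h + eta^-1 * ln (wealth h).

Lemma potential_rcons h rd : potential (rcons h rd) = potential h
  + ((maxRev K (eval fstar (rx rd)) (rr rd) - Rev (rS rd) (eval fstar (rx rd)) (rr rd))
     + eta^-1 * ln (\sum_(g : Fi) w h g * expR (- eta * (l rd g - l rd fstar)))).
Proof.
rewrite /potential /cum_regret big_rcons /= wealth_rcons lnM ?posrE ?wealth_gt0 //; first ring.
by apply: wavg_gt0 => [g||g]; [exact: fgts_weights_ge0 | exact: fgts_weights_sum1 | exact: expR_gt0].
Qed.

Lemma expect_potential_le n h :
  E n h potential <= potential h + n%:R * ((12 * N%:R * K%:R * (K%:R + 1) ^+ 4 + 4) * eta).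
Proof.
elim: n h => [|n IH] h /=; first by rewrite mul0r addr0.
set C := (_ + 4) * eta; set x := (adv h).1; set r := (adv h).2.
pose S f := sel h (eval f x) r.
have hSf g : validS K (S g) /\ maxRev K (eval g x) r = Rev (S g) (eval g x) r.
  have [hS hmax] := hsel h (eval g x) r.
  by split=> //; apply: maxRev_eq_Rev hS hmax; [exact: hev | exact: hadv].
pose Z f i := (maxRev K (eval fstar x) r - Rev (S f) (eval fstar x) r) + eta^-1 * ln
  (\sum_g w h g * expR (- eta * (l (Round f x r (S f) i) g - l (Round f x r (S f) i) fstar))).
have hstep f i : E n (rcons h (Round f x r (S f) i)) potential <= potential h + n%:R * C + Z f i.
  by apply: (le_trans (IH _)); rewrite potential_rcons /= addrAC.
apply: (le_trans (y := \sum_f w h f *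
    \sum_i mu (S f) (eval fstar x) i * (potential h + n%:R * C + Z f i))).
  apply: ler_sum => f _; rewrite ler_wpM2l ?fgts_weights_ge0 //.
  by apply: ler_sum => i _; rewrite ler_wpM2l ?(mu_ge0 _ i (hev fstar x)).
have hsplit f : \sum_i mu (S f) (eval fstar x) i * (potential h + n%:R * C + Z f i)
    = potential h + n%:R * C + \sum_i mu (S f) (eval fstar x) i * Z f i.
  under eq_bigr => i _ do rewrite mulrDr.
  by rewrite big_split /= -mulr_suml (mu_sum1 _ (hev fstar x)) mul1r.
under eq_bigr => f _ do rewrite hsplit mulrDr.
rewrite big_split /= -mulr_suml fgts_weights_sum1 mul1r -natr1 mulrDl mul1r addrA lerD2l.
apply: round_potential_le => //; [exact: fgts_weights_ge0 | exact: fgts_weights_sum1 | exact: hadv].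
Qed.

End Potential.

Theorem theorem6 (R : realType) (N K : nat) (Fi : finType) (X : Type)
  (eval : Fi -> X -> 'I_N -> R) (fstar : Fi) (eta : R) (T : nat)
  (adv : seq (@round R N Fi X) -> X * ('I_N -> R))
  (sel : seq (@round R N Fi X) -> ('I_N -> R) -> ('I_N -> R) -> {set 'I_N}) :
  (1 <= K)%N -> (K <= N)%N ->
  0 < eta -> eta <= 1 ->
  injective eval ->
  (forall f x i, 0 <= eval f x i <= 1) ->
  (forall h i, 0 <= (adv h).2 i <= 1) ->
  (forall h v r, validS K (sel h v r) /\
     forall S, validS K S -> Rev S v r <= Rev (sel h v r) v r) ->
  regret_MNL K eta eval fstar adv sel T
    <= 12 * eta * N%:R * K%:R * (K%:R + 1) ^+ 4 * T%:R + 4 * eta * T%:R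
       + Z_T K eta eval fstar adv sel T / eta.
Proof.
move=> hK _ he0 he1 _ hev hadv hsel.
have := expect_potential_le fstar hK he0 he1 hev hadv hsel T [::].
rewrite /potential fgts_expectDZ /cum_regret big_nil wealth_nil ln1 mulr0 !addr0 add0r.
rewrite /regret_MNL /Z_T mulNr mulrC.
by lra.
Qed.
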